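(* Fix $(t,\mathbf x)\in\mathbf D^0$ at which the quantities $\lambda,\mu,\widetilde{\boldsymbol\zeta},\widetilde g$ below are well defined. If the vectors $\mathbf c(t,\mathbf x)$ and $\mathbf v(t,\mathbf x)$ are collinear (i.e. $\mathbf v(t,\mathbf x)=k\,\mathbf c(t,\mathbf x)$ for some $k\in\mathbb R$), then $\widetilde g(t,\mathbf x)=0$.
   Context: Let $\mathbf G=\mathbb R_+\times\mathbb R\times\mathbb R_+$, $\mathbf D^0=(0,T)\times\mathbf G\times\mathbb R_+$ with generic point $(t,\mathbf x)$, $\mathbf x=(S,A,M,\Sigma)$. Let $\mathcal C(t,S,\Sigma)$ (Black–Scholes value of a traded option) and $\mathcal V(t,S,A,M,\Sigma)$ (Black–Scholes value of a non-traded option) be sufficiently differentiable functions, and $\beta,\gamma$ real functions of $(t,S,A,M)$. Define $\Gamma=\mathcal V_{SS}+2\gamma\mathcal V_{SA}+\gamma^2\mathcal V_{AA}$, $\frac{\partial\Delta}{\partial\Sigma}:=\mathcal V_{S\Sigma}+\gamma\mathcal V_{A\Sigma}$, the vega-gamma-vanna-volga vectors $\mathbf c=(\mathcal C_\Sigma,\Sigma S^2\mathcal C_{SS},\Sigma S\mathcal C_{S\Sigma},\frac12\mathcal C_{\Sigma\Sigma})^\top$ and $\mathbf v=(\mathcal V_\Sigma,\Sigma(\beta\mathcal V_A+S^2\Gamma),\Sigma S\frac{\partial\Delta}{\partial\Sigma},\frac12\mathcal V_{\Sigma\Sigma})^\top$. Fix $\psi_\nu,\psi_\sigma,\psi_\eta,\psi_\xi>0$,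 $\Psi=\mathrm{diag}(\psi_\nu,\psi_\sigma,\psi_\eta,\psi_\xi)$. Let $\lambda=\frac{\mathbf c^\top\Psi\mathbf v}{\mathbf c^\top\Psi\mathbf c}$ if $\mathcal V_{\Sigma\Sigma}-\frac{\mathbf c^\top\Psi\mathbf v}{\mathbf c^\top\Psi\mathbf c}\mathcal C_{\Sigma\Sigma}\ge0$ and $\lambda=\frac{\mathbf c^\top\Psi\mathbf v-\frac14\mathcal C_{\Sigma\Sigma}\mathcal V_{\Sigma\Sigma}\psi_\xi}{\mathbf c^\top\Psi\mathbf c-\frac14\mathcal C_{\Sigma\Sigma}^2\psi_\xi}$ otherwise; $\mu=\frac12(\mathcal V_{\Sigma\Sigma}-\lambda\mathcal C_{\Sigma\Sigma})^-$ where $x^-=\max(-x,0)$; $\widetilde{\boldsymbol\zeta}=\Psi(\mathbf v-\lambda\mathbf c+\mu\mathbf e_4)$ with $\mathbf e_4$ the fourth unit vector; and $\widetilde g=\mathbf v^\top\widetilde{\boldsymbol\zeta}$. All functions are evaluated at $(t,\mathbf x)$. *)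

From Stdlib Require Import Reals.
From Coquelicot Require Import Coquelicot.
Open Scope R_scope.

(* Vectors in R^4 (vega, gamma, vanna, volga components). *)
Record vec4 := Vec4 { c1 : R; c2 : R; c3 : R; c4 : R }.

Definition vscale (k : R) (a : vec4) : vec4 :=
  Vec4 (k * c1 a) (k * c2 a) (k * c3 a) (k * c4 a).

(* Psi = diag(pn, ps, pe, px); wdot = a^T Psi b *)
Definition wdot (pn ps pe px : R) (a b : vec4) : R :=
  pn * c1 a * c1 b + ps * c2 a * c2 b + pe * c3 a * c3 b + px * c4 a * c4 b.

Definition wmul (pn ps pe px : R) (a : vec4) : vec4 :=
  Vec4 (pn * c1 a) (ps * c2 a) (pe * c3 a) (px * c4 a).

Definition dot4 (a b : vec4) : R :=
  c1 a * c1 b + c2 a * c2 b + c3 a * c3 b + c4 a * c4 b.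

Definition neg_part (x : R) : R := Rmax (- x) 0.

Section Greeks.
(* traded option C(t,S,Sigma), non-traded option V(t,S,A,M,Sigma),
   beta, gamma functions of (t,S,A,M) *)
Variables (C : R -> R -> R -> R) (V : R -> R -> R -> R -> R -> R)
          (beta gamma : R -> R -> R -> R -> R).
Variables (t S A M Sig : R).

Definition C_Sig := Derive (fun sg => C t S sg) Sig.
Definition C_SS := Derive (fun s => Derive (fun s' => C t s' Sig) s) S.
Definition C_SSig := Derive (fun sg => Derive (fun s => C t s sg) S) Sig.
Definition C_SigSig := Derive (fun sg => Derive (fun sg' => C t S sg') sg) Sig.

Definition V_Sig := Derive (fun sg => V t S A M sg) Sig.
Definition V_A := Derive (fun a => V t S a M Sig) A.
Definition V_SS := Derive (fun s => Derive (fun s' => V t s' A M Sig) s) S.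
Definition V_SA := Derive (fun a => Derive (fun s => V t s a M Sig) S) A.
Definition V_AA := Derive (fun a => Derive (fun a' => V t S a' M Sig) a) A.
Definition V_SSig := Derive (fun sg => Derive (fun s => V t s A M sg) S) Sig.
Definition V_ASig := Derive (fun sg => Derive (fun a => V t S a M sg) A) Sig.
Definition V_SigSig := Derive (fun sg => Derive (fun sg' => V t S A M sg') sg) Sig.

Definition gam := gamma t S A M.
Definition bet := beta t S A M.

Definition Gamma := V_SS + 2 * gam * V_SA + gam ^ 2 * V_AA.
Definition dDelta_dSig := V_SSig + gam * V_ASig.

Definition cvec : vec4 :=
  Vec4 C_Sig (Sig * S ^ 2 * C_SS) (Sig * S * C_SSig) (/ 2 * C_SigSig).
Definition vvec : vec4 :=
  Vec4 V_Sig (Sig * (bet * V_A + S ^ 2 * Gamma)) (Sig * S * dDelta_dSig)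
       (/ 2 * V_SigSig).

Variables (pn ps pe px : R).

Definition lambda0 := wdot pn ps pe px cvec vvec / wdot pn ps pe px cvec cvec.

Definition lambda : R :=
  if Rle_dec 0 (V_SigSig - lambda0 * C_SigSig) then lambda0
  else (wdot pn ps pe px cvec vvec - / 4 * C_SigSig * V_SigSig * px)
       / (wdot pn ps pe px cvec cvec - / 4 * C_SigSig ^ 2 * px).

Definition mu : R := / 2 * neg_part (V_SigSig - lambda * C_SigSig).

Definition zeta_tilde : vec4 :=
  wmul pn ps pe px
    (Vec4 (c1 vvec - lambda * c1 cvec) (c2 vvec - lambda * c2 cvec)
          (c3 vvec - lambda * c3 cvec) (c4 vvec - lambda * c4 cvec + mu)).

Definition g_tilde : R := dot4 vvec zeta_tilde.

Definition well_defined : Prop :=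
  wdot pn ps pe px cvec cvec <> 0 /\
  (~ (0 <= V_SigSig - lambda0 * C_SigSig) ->
     wdot pn ps pe px cvec cvec - / 4 * C_SigSig ^ 2 * px <> 0).

End Greeks.

(* If v = k c, the weighted projection coefficient c^T Psi v / c^T Psi c is k, so the
   volga residual V_SigSig - k C_SigSig vanishes: the first branch defines lambda = k and
   mu = 0.  Then zeta = Psi (v - k c) = 0 and g = v^T zeta = 0. *)

From Stdlib Require Import Reals Lra.
From Coquelicot Require Import Coquelicot.
Open Scope R_scope.

Lemma neg_part_0 : neg_part 0 = 0.
Proof. unfold neg_part. rewrite Ropp_0, Rmax_left; lra. Qed.

Lemma wdot_scale_r (pn ps pe px k : R) (a b : vec4) :
  wdot pn ps pe px a (vscale k b) = k * wdot pn ps pe px a b.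
Proof. destruct a, b. unfold wdot, vscale; simpl. ring. Qed.

Section Collinear.

Variables (C : R -> R -> R -> R) (V : R -> R -> R -> R -> R -> R)
          (beta gamma : R -> R -> R -> R -> R)
          (pn ps pe px : R) (t S A M Sig k : R).

Hypothesis v_collinear : vvec V beta gamma t S A M Sig = vscale k (cvec C t S Sig).
Hypothesis cc_neq0 : wdot pn ps pe px (cvec C t S Sig) (cvec C t S Sig) <> 0.

Lemma V_SigSig_collinear : V_SigSig V t S A M Sig = k * C_SigSig C t S Sig.
Proof. assert (H4 := f_equal c4 v_collinear). simpl in H4. lra. Qed.

Lemma lambda0_collinear : lambda0 C V beta gamma t S A M Sig pn ps pe px = k.
Proof.
  unfold lambda0. rewrite v_collinear, wdot_scale_r.
  field. exact cc_neq0.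
Qed.

Lemma lambda_collinear : lambda C V beta gamma t S A M Sig pn ps pe px = k.
Proof.
  unfold lambda. rewrite lambda0_collinear, V_SigSig_collinear.
  destruct (Rle_dec 0 _); [reflexivity | lra].
Qed.

Lemma mu_collinear : mu C V beta gamma t S A M Sig pn ps pe px = 0.
Proof.
  unfold mu. rewrite lambda_collinear, V_SigSig_collinear, Rminus_diag, neg_part_0.
  ring.
Qed.

Lemma g_tilde_collinear : g_tilde C V beta gamma t S A M Sig pn ps pe px = 0.
Proof.
  unfold g_tilde, zeta_tilde. rewrite lambda_collinear, mu_collinear, v_collinear.
  destruct (cvec C t S Sig). unfold dot4, wmul, vscale; simpl. ring.
Qed.

End Collinear.

Theorem proposition4p7
  (T : R) (C : R -> R -> R -> R) (V : R -> R -> R -> R -> R -> R)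
  (beta gamma : R -> R -> R -> R -> R)
  (pn ps pe px : R) (t S A M Sig : R) :
  0 < pn -> 0 < ps -> 0 < pe -> 0 < px ->
  0 < t < T -> 0 < S -> 0 < M -> 0 < Sig ->
  well_defined C V beta gamma t S A M Sig pn ps pe px ->
  (exists k : R, vvec V beta gamma t S A M Sig = vscale k (cvec C t S Sig)) ->
  g_tilde C V beta gamma t S A M Sig pn ps pe px = 0.
Proof.
  intros _ _ _ _ _ _ _ _ [cc_neq0 _] [k v_collinear].
  exact (g_tilde_collinear C V beta gamma pn ps pe px t S A M Sig k v_collinear cc_neq0).
Qed.
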